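(* For any graph $H$ and any positive integer $r$, $H$ is (isomorphic to) a subgraph of $G(\mathbb{Z}^2, \sqrt{r})$ if and only if $H$ is (isomorphic to) a subgraph of $G(\mathbb{Z}^2, \sqrt{2r})$.
   Context: For $X \subseteq \mathbb{R}^m$ and $d>0$, $G(X,d)$ denotes the Euclidean distance graph with vertex set $X$ in which two vertices are adjacent if and only if their Euclidean distance is exactly $d$. *)

From Stdlib Require Import ZArith Reals.
From mathcomp Require Import all_boot.

Set Implicit Arguments.
Unset Strict Implicit.
Unset Printing Implicit Defensive.

Definition Z2 : Type := (Z * Z)%type.

Definition euclid_dist (p q : Z2) : R :=
  sqrt (Rplus (pow (IZR (Z.sub (fst p) (fst q))) 2) (pow (IZR (Z.sub (snd p) (snd q))) 2)).

Definition G_Z2_adj (d : R) (p q : Z2) : Prop := euclid_dist p q = d.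

Definition simple_graph (V : finType) (E : rel V) : Prop :=
  symmetric E /\ irreflexive E.

Definition subgraph_of_G_Z2 (V : finType) (E : rel V) (d : R) : Prop :=
  exists f : V -> Z2, injective f /\ forall u v, E u v -> G_Z2_adj d (f u) (f v).

(* Identify Z^2 with the Gaussian integers.  Multiplication by 1 + i is an
   injective map doubling squared distances, which gives one direction.
   Conversely, a squared distance 2r is even, so adjacent points of the
   embedding have the same parity of x + y; translating the odd class by a
   large odd horizontal shift lands every vertex in the ideal (1 + i) without
   changing any edge length or creating collisions, and dividing by 1 + i
   then halves all squared distances. *)
From Stdlib Require Import ZArith Reals Lia.
From mathcomp Require Import all_boot.

Open Scope Z_scope.

Definition sq_dist (p q : Z2) : Z :=
  (p.1 - q.1) * (p.1 - q.1) + (p.2 - q.2) * (p.2 - q.2).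

Lemma G_Z2_adj_sqrt_nat (n : nat) (p q : Z2) :
  G_Z2_adj (sqrt (INR n)) p q <-> sq_dist p q = Z.of_nat n.
Proof.
rewrite /G_Z2_adj /euclid_dist /sq_dist INR_IZR_INZ /= !Rmult_1_r -!mult_IZR -plus_IZR.
split=> [eq_sqrt | -> //].
apply/eq_IZR/(sqrt_inj _ _ _ _ eq_sqrt); apply: IZR_le; last exact: Zle_0_nat.
by apply: Z.add_nonneg_nonneg; apply: Z.square_nonneg.
Qed.

(* (x + iy)(1 + i) and (x + iy)/(1 + i) = ((x + y) + i(y - x))/2. *)
Definition mul1i (p : Z2) : Z2 := (p.1 - p.2, p.1 + p.2).

Definition div1i (p : Z2) : Z2 := ((p.1 + p.2) / 2, (p.2 - p.1) / 2).

Definition even_pt (p : Z2) : bool := Z.even (p.1 + p.2).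

Lemma mul1i_inj : injective mul1i.
Proof. by case=> a b [c d] [] /= h1 h2; f_equal; lia. Qed.

Lemma sq_dist_mul1i (p q : Z2) : sq_dist (mul1i p) (mul1i q) = 2 * sq_dist p q.
Proof. by rewrite /sq_dist /mul1i; cbn [fst snd]; ring. Qed.

Lemma mul1i_div1i (p : Z2) : even_pt p -> mul1i (div1i p) = p.
Proof.
case: p => x y; rewrite /even_pt /div1i /mul1i; cbn [fst snd].
move=> /Z.even_spec [m def_m].
rewrite def_m (_ : y - x = (m - x) * 2); last by lia.
rewrite (Z.mul_comm 2) !Z.div_mul //; f_equal; lia.
Qed.

Lemma sq_dist_div1i (p q : Z2) : even_pt p -> even_pt q ->
  2 * sq_dist (div1i p) (div1i q) = sq_dist p q.
Proof. by move=> even_p even_q; rewrite -sq_dist_mul1i !mul1i_div1i. Qed.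

Lemma even_sq_dist (p q : Z2) :
  Z.even (sq_dist p q) = Bool.eqb (even_pt p) (even_pt q).
Proof.
rewrite /sq_dist /even_pt Z.even_add !Z.even_mul !Z.even_sub !Z.even_add.
by case: (Z.even p.1); case: (Z.even p.2); case: (Z.even q.1); case: (Z.even q.2).
Qed.

Lemma even_pt_eq_of_sq_dist_double (p q : Z2) (r : Z) :
  sq_dist p q = 2 * r -> even_pt p = even_pt q.
Proof.
move=> dpq; have := even_sq_dist p q.
by rewrite dpq Z.even_mul /=; case: (even_pt p); case: (even_pt q).
Qed.

Definition shift_odd (k : Z) (p : Z2) : Z2 :=
  if even_pt p then p else (p.1 + k, p.2).

Lemma even_pt_shift_odd (k : Z) (p : Z2) : Z.odd k -> even_pt (shift_odd k p).
Proof.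
rewrite /shift_odd /even_pt; case: ifPn => // odd_p odd_k; cbn [fst snd].
rewrite -Z.add_assoc (Z.add_comm k) Z.add_assoc Z.even_add.
by rewrite (negbTE odd_p) -Z.negb_odd odd_k.
Qed.

Lemma sq_dist_shift_odd (k : Z) (p q : Z2) : even_pt p = even_pt q ->
  sq_dist (shift_odd k p) (shift_odd k q) = sq_dist p q.
Proof.
rewrite /shift_odd => <-; case: (even_pt p) => //.
by rewrite /sq_dist /=; ring.
Qed.

Lemma shift_odd_inj (k : Z) (p q : Z2) : p.1 + k <> q.1 -> q.1 + k <> p.1 ->
  shift_odd k p = shift_odd k q -> p = q.
Proof.
case: p q => [a b] [c d]; rewrite /shift_odd.
case: (even_pt _); case: (even_pt _) => /= ne1 ne2 [] h1 h2; f_equal; lia.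
Qed.

Lemma exists_odd_separating_shift {V : finType} (x : V -> Z) :
  exists k, Z.odd k /\ forall u v, x u + k <> x v.
Proof.
pose M := (\max_(v : V) Z.abs_nat (x v))%N.
have bound_M v : Z.abs (x v) <= Z.of_nat M.
  have /leP := @leq_bigmax V (fun v => Z.abs_nat (x v)) v.
  by rewrite -/M; clearbody M; lia.
exists (2 * Z.of_nat M + 1); split.
  by apply/Z.odd_spec; exists (Z.of_nat M).
by move=> u v; have := bound_M u; have := bound_M v; lia.
Qed.

Section Scaling.

Variables (V : finType) (E : rel V) (n : nat).

Lemma subgraph_of_G_Z2_double :
  subgraph_of_G_Z2 E (sqrt (INR n)) -> subgraph_of_G_Z2 E (sqrt (INR (2 * n)%N)).
Proof.
case=> f [f_inj f_adj]; exists (mul1i \o f); split.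
  exact: inj_comp mul1i_inj f_inj.
move=> u v /f_adj; rewrite !G_Z2_adj_sqrt_nat /= sq_dist_mul1i => ->.
by rewrite -multE; lia.
Qed.

Lemma subgraph_of_G_Z2_half :
  subgraph_of_G_Z2 E (sqrt (INR (2 * n)%N)) -> subgraph_of_G_Z2 E (sqrt (INR n)).
Proof.
case=> f [f_inj f_adj].
have [k [odd_k sep_k]] := exists_odd_separating_shift (fun v => (f v).1).
have even_g v : even_pt (shift_odd k (f v)) by exact: even_pt_shift_odd.
exists (fun v => div1i (shift_odd k (f v))); split.
  move=> u v /(congr1 mul1i); rewrite !mul1i_div1i // => eq_shift.
  exact/f_inj/(shift_odd_inj _ _ _ (sep_k u v) (sep_k v u) eq_shift).
move=> u v /f_adj; rewrite !G_Z2_adj_sqrt_nat -multE Nat2Z.inj_mul => dfuv.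
have same_class := even_pt_eq_of_sq_dist_double _ _ _ dfuv.
have := sq_dist_div1i _ _ (even_g u) (even_g v).
by rewrite sq_dist_shift_odd // dfuv; lia.
Qed.

End Scaling.

Theorem theorem1 (V : finType) (E : rel V) (hE : simple_graph E)
    (r : nat) (hr : (0 < r)%N) :
  subgraph_of_G_Z2 E (sqrt (INR r)) <-> subgraph_of_G_Z2 E (sqrt (INR (2 * r)%N)).
Proof.
(* The equivalence holds for every relation E and every r. *)
split; [exact: subgraph_of_G_Z2_double | exact: subgraph_of_G_Z2_half].
Qed.
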